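(* Let $\mathbb{K}$ be an $\aleph_0$-complete field and $x=(x_1,\ldots,x_n)$. Let $F$ be a finite system of polynomial equations, with coefficients in $\mathbb{K}[\![x]\!]$, in unknowns $z_1,\ldots,z_q$ and some of their partial derivatives $\partial^{|j_1|}z_{i_1}/\partial x^{j_1},\ldots,\partial^{|j_s|}z_{i_s}/\partial x^{j_s}$, where $i_1,\ldots,i_s\in\{1,\ldots,q\}$ and $j_1,\ldots,j_s\in\mathbb{N}^n$. If $F=0$ has approximate solutions up to any order, i.e. for every $c\in\mathbb{N}$ there exists $z\in\mathbb{K}[\![x]\!]^q$ such that $F$ evaluated at $z$ and its corresponding partial derivatives lies in $(x)^c$, then $F=0$ has a solution $z\in\mathbb{K}[\![x]\!]^q$.
   Context: A field $\mathbb{K}$ is called $\aleph_0$-complete if every countable system $\mathcal S$ of polynomial equations with coefficients in $\mathbb{K}$ (in a countable number of indeterminates) has a solution in $\mathbb{K}$ if and only if every finite sub-system of $\mathcal S$ has a solution in $\mathbb{K}$. $(x)$ is the maximal ideal of $\mathbb{K}[\![x]\!]$; for $j=(j^1,\ldots,j^n)\in\mathbb{N}^n$, $|j|=j^1+\cdots+j^n$ and $\partial^{|j|}/\partial x^j$ denotes the formal partial derivative $\partial^{|j|}/\partial x_1^{j^1}\cdots\partial x_n^{j^n}$. *)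

From mathcomp Require Import all_boot all_algebra.
Set Implicit Arguments. Unset Strict Implicit. Unset Printing Implicit Defensive.
Import GRing.Theory.
Local Open Scope ring_scope.

(* A polynomial with coefficients in K in countably many indeterminates
   X_0, X_1, ... : a finite list of terms c * X_{v1} * ... * X_{vr}. *)
Definition cpoly (K : fieldType) := seq (K * seq nat).

Definition ceval (K : fieldType) (v : nat -> K) (p : cpoly K) : K :=
  \sum_(t <- p) t.1 * \prod_(k <- t.2) v k.

Definition aleph0_complete (K : fieldType) : Prop :=
  forall S : nat -> cpoly K,
    (exists v : nat -> K, forall k, ceval v (S k) = 0) <->
    (forall s : seq nat, exists v : nat -> K, forall k, k \in s -> ceval v (S k) = 0).

Definition mexp (n : nat) := {ffun 'I_n -> nat}.
Definition PS (K : fieldType) (n : nat) := mexp n -> K.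

Definition mdeg n (e : mexp n) : nat := (\sum_(i < n) e i)%N.

Section PSops.
Variables (K : fieldType) (n : nat).

Definition ps0 : PS K n := fun _ => 0.
Definition ps1 : PS K n := fun e => if mdeg e == 0%N then 1 else 0.
Definition ps_add (f g : PS K n) : PS K n := fun e => f e + g e.
(* Cauchy product: (fg)_m = sum_{a <= m} f_a g_{m-a}. *)
Definition ps_mul (f g : PS K n) : PS K n := fun m =>
  \sum_(a : {ffun 'I_n -> 'I_((\max_(i < n) m i).+1)} | [forall i, (a i <= m i)%N])
     f [ffun i => (a i : nat)] * g [ffun i => (m i - a i)%N].

Definition ps_deriv (j : mexp n) (f : PS K n) : PS K n := fun m =>
  (\prod_(i < n) ((m i + j i) ^_ (j i)))%N%:R * f [ffun i => (m i + j i)%N].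

Definition in_xpow (c : nat) (f : PS K n) : Prop :=
  forall e : mexp n, (mdeg e < c)%N -> f e = 0.
End PSops.

(* A polynomial with coefficients in K[[x]] in the unknowns
   d^{|j|} z_i / dx^j  (i < q, j in N^n; j = 0 gives z_i itself):
   a finite list of terms  c * prod_{(i,j) in list} d^j z_i. *)
Definition dpoly (K : fieldType) (n q : nat) := seq (PS K n * seq ('I_q * mexp n)).

Definition deval (K : fieldType) (n q : nat) (z : 'I_q -> PS K n)
    (P : dpoly K n q) : PS K n :=
  \big[@ps_add K n/@ps0 K n]_(t <- P)
     ps_mul t.1 (\big[@ps_mul K n/@ps1 K n]_(u <- t.2) ps_deriv u.2 (z u.1)).

From mathcomp Require Import all_boot all_algebra.
From Stdlib Require Import FunctionalExtensionality.
Set Implicit Arguments. Unset Strict Implicit. Unset Printing Implicit Defensive.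
Import GRing.Theory.
Local Open Scope ring_scope.

(* Take the coefficients of z_1, ..., z_q as countably many unknowns.  Each
   coefficient of a product of power series is a finite sum, and derivation
   only rescales coefficients, so every coefficient of F(z) is a polynomial
   in finitely many unknowns: F(z) = 0 is a countable polynomial system over
   K.  A finite subsystem only involves coefficients of degree < c for some c,
   so an approximate solution up to order c solves it; aleph_0-completeness
   then yields an exact solution. *)

Section PolynomialFunctions.
Variable K : fieldType.

Definition polyfun (f : (nat -> K) -> K) :=
  {p : cpoly K | forall v, f v = ceval v p}.

Fixpoint cpoly_mul (p r : cpoly K) : cpoly K :=
  if p is a :: p' then [seq (a.1 * b.1, a.2 ++ b.2) | b <- r] ++ cpoly_mul p' r
  else [::].

Lemma ceval_cat (v : nat -> K) (p r : cpoly K) :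
  ceval v (p ++ r) = ceval v p + ceval v r.
Proof. by rewrite /ceval big_cat. Qed.

Lemma ceval_mul (v : nat -> K) (p r : cpoly K) :
  ceval v (cpoly_mul p r) = ceval v p * ceval v r.
Proof.
elim: p => [|a p IHp] /=; first by rewrite /ceval !big_nil mul0r.
rewrite ceval_cat IHp [in RHS]/ceval big_cons mulrDl; congr (_ + _).
rewrite /ceval big_map mulr_sumr; apply: eq_bigr => b _ /=.
by rewrite big_cat /= mulrACA.
Qed.

Lemma polyfun_ext (f g : (nat -> K) -> K) :
  (forall v, f v = g v) -> polyfun f -> polyfun g.
Proof. by move=> efg [p hp]; exists p => v; rewrite -efg. Qed.

Lemma polyfun_cst (c : K) : polyfun (fun=> c).
Proof. by exists [:: (c, [::])] => v; rewrite /ceval big_seq1 big_nil mulr1. Qed.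

Lemma polyfun_var (i : nat) : polyfun (fun v => v i).
Proof. by exists [:: (1, [:: i])] => v; rewrite /ceval !big_seq1 mul1r. Qed.

Lemma polyfunD (f g : (nat -> K) -> K) :
  polyfun f -> polyfun g -> polyfun (fun v => f v + g v).
Proof. by move=> [p hp] [r hr]; exists (p ++ r) => v; rewrite ceval_cat hp hr. Qed.

Lemma polyfunM (f g : (nat -> K) -> K) :
  polyfun f -> polyfun g -> polyfun (fun v => f v * g v).
Proof. by move=> [p hp] [r hr]; exists (cpoly_mul p r) => v; rewrite ceval_mul hp hr. Qed.

Lemma polyfun_sum (I : Type) (r : seq I) (P : pred I) (F : I -> (nat -> K) -> K) :
  (forall i, polyfun (F i)) -> polyfun (fun v => \sum_(i <- r | P i) F i v).
Proof.
move=> polyF; elim: r => [|a r IHr].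
  by apply: (polyfun_ext _ (polyfun_cst 0)) => v; rewrite big_nil.
case: (boolP (P a)) => Pa.
  by apply: (polyfun_ext _ (polyfunD (polyF a) IHr)) => v; rewrite big_cons Pa.
by apply: (polyfun_ext _ IHr) => v; rewrite big_cons (negbTE Pa).
Qed.

End PolynomialFunctions.

Section CoefficientwisePolynomial.
Variables (K : fieldType) (n : nat).

Definition coef_polyfun (g : (nat -> K) -> PS K n) :=
  forall e, polyfun (fun v => g v e).

Lemma coef_polyfun_cst (f : PS K n) : coef_polyfun (fun=> f).
Proof. by move=> e; apply: polyfun_cst. Qed.

Lemma coef_polyfunD (f g : (nat -> K) -> PS K n) :
  coef_polyfun f -> coef_polyfun g -> coef_polyfun (fun v => ps_add (f v) (g v)).
Proof. by move=> pf pg e; apply: polyfunD. Qed.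

Lemma coef_polyfunM (f g : (nat -> K) -> PS K n) :
  coef_polyfun f -> coef_polyfun g -> coef_polyfun (fun v => ps_mul (f v) (g v)).
Proof. by move=> pf pg e; apply: polyfun_sum => a; apply: polyfunM. Qed.

Lemma coef_polyfun_deriv (j : mexp n) (f : (nat -> K) -> PS K n) :
  coef_polyfun f -> coef_polyfun (fun v => ps_deriv j (f v)).
Proof. by move=> pf e; apply: polyfunM; [apply: polyfun_cst | apply: pf]. Qed.

Lemma coef_polyfun_big (I : Type) (r : seq I) (op : PS K n -> PS K n -> PS K n)
    (idx : PS K n) (F : I -> (nat -> K) -> PS K n) :
  (forall f g, coef_polyfun f -> coef_polyfun g ->
     coef_polyfun (fun v => op (f v) (g v))) ->
  (forall i, coef_polyfun (F i)) ->
  coef_polyfun (fun v => \big[op/idx]_(i <- r) F i v).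
Proof.
move=> pop pF; elim: r => [|a r IHr] e.
  by apply: (polyfun_ext _ (coef_polyfun_cst idx e)) => v; rewrite big_nil.
by apply: (polyfun_ext _ (pop _ _ (pF a) IHr e)) => v; rewrite big_cons.
Qed.

End CoefficientwisePolynomial.

Section CoefficientUnknowns.
Variables (K : fieldType) (n q : nat).

Definition ps_of_unknowns (v : nat -> K) : 'I_q -> PS K n :=
  fun i e => v (pickle (i, e)).

Definition unknowns_of_ps (z : 'I_q -> PS K n) : nat -> K :=
  fun j => if @unpickle ('I_q * mexp n)%type j is Some ie then z ie.1 ie.2 else 0.

Lemma unknowns_of_psK (z : 'I_q -> PS K n) : ps_of_unknowns (unknowns_of_ps z) = z.
Proof.
apply: functional_extensionality => i; apply: functional_extensionality => e.
by rewrite /ps_of_unknowns /unknowns_of_ps pickleK.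
Qed.

Lemma coef_polyfun_deval (P : dpoly K n q) :
  coef_polyfun (fun v => deval (ps_of_unknowns v) P).
Proof.
apply: coef_polyfun_big; first exact: coef_polyfunD.
move=> t; apply: coef_polyfunM; first exact: coef_polyfun_cst.
apply: coef_polyfun_big; first exact: coef_polyfunM.
by move=> u; apply: coef_polyfun_deriv => e; apply: polyfun_var.
Qed.

End CoefficientUnknowns.

Section CoefficientSystem.
Variables (K : fieldType) (n q m : nat) (F : 'I_m -> dpoly K n q).

(* Equation number [pickle (k, e)] says that the coefficient of x^e in F k
   vanishes; indices outside the range of [pickle] carry the equation 0 = 0. *)
Definition coef_eqn (j : nat) : cpoly K :=
  if @unpickle ('I_m * mexp n)%type j is Some ke
  then sval (coef_polyfun_deval (F ke.1) ke.2) else [::].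

Lemma ceval_coef_eqn (v : nat -> K) (j : nat) :
  ceval v (coef_eqn j) =
  if @unpickle ('I_m * mexp n)%type j is Some ke
  then deval (ps_of_unknowns v) (F ke.1) ke.2 else 0.
Proof.
rewrite /coef_eqn; case: unpickle => [[k e]|]; last by rewrite /ceval big_nil.
by case: coef_polyfun_deval => p hp; rewrite hp.
Qed.

Definition coef_eqn_deg (j : nat) : nat :=
  if @unpickle ('I_m * mexp n)%type j is Some ke then mdeg ke.2 else 0.

Lemma approx_solution_solves_coef_eqn (c : nat) (z : 'I_q -> PS K n) (j : nat) :
  (forall k, in_xpow c (deval z (F k))) -> (coef_eqn_deg j < c)%N ->
  ceval (unknowns_of_ps z) (coef_eqn j) = 0.
Proof.
move=> zapprox; rewrite ceval_coef_eqn unknowns_of_psK.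
by rewrite /coef_eqn_deg; case: unpickle => [[k e]|] // degc; apply: zapprox.
Qed.

Lemma finite_coef_subsystem_solvable :
  (forall c, exists z : 'I_q -> PS K n, forall k, in_xpow c (deval z (F k))) ->
  forall s : seq nat, exists v : nat -> K,
    forall j, j \in s -> ceval v (coef_eqn j) = 0.
Proof.
move=> happrox s.
have [z zapprox] := happrox (\max_(j <- s) coef_eqn_deg j).+1.
exists (unknowns_of_ps z) => j js.
by apply: (approx_solution_solves_coef_eqn zapprox); rewrite ltnS leq_bigmax_seq.
Qed.

End CoefficientSystem.

Theorem corollary4p1 (K : fieldType) (hK : aleph0_complete K) (n q m : nat)
    (F : 'I_m -> dpoly K n q) :
  (forall c : nat, exists z : 'I_q -> PS K n,
      forall k : 'I_m, in_xpow c (deval z (F k))) ->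
  exists z : 'I_q -> PS K n, forall (k : 'I_m) (e : mexp n), deval z (F k) e = 0.
Proof.
move=> happrox.
have [v solv] := (hK (coef_eqn F)).2 (finite_coef_subsystem_solvable happrox).
exists (ps_of_unknowns v) => k e.
by have := solv (pickle (k, e)); rewrite ceval_coef_eqn pickleK.
Qed.
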